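(* Let $n\ge1$. Let $H_1,H_2$ be two edge-disjoint Hamilton cycles of $G_{n,3}$ and $E_1,E_2$ two edge-disjoint directed Hamilton cycles of $Q_{2n}$ (starting at $\mathbf 0$). Then the four Hamilton cycles $g(E_1,H_1)$, $g(E_1,H_2)$, $g(E_2,H_1)$, $g(E_2,H_2)$ of $Q_{6n}$ are pairwise edge-disjoint.
   Context: $Q_{2n}$ is realized as the graph on quaternary strings $q_1\cdots q_n$, $q_i\in\{0,1,2,3\}$, adjacent iff they differ in exactly one position and there by $\pm1\pmod4$; $\mathbf 0=0\cdots0$. $G_{n,3}=C_{4^n}\Box C_{4^n}\Box C_{4^n}$ has vertex set $(\mathbb Z/4^n\mathbb Z)^3$, adjacency: differ in exactly one coordinate, by $\pm1\pmod{4^n}$. For a directed Hamilton cycle $E$ of $Q_{2n}$ listing vertices $e_0=\mathbf 0,e_1,\dots,e_{4^n-1}$, put $\pi_E(e_p)=p$. Identify $V(Q_{6n})$ with triples $(u,w,t)$ of quaternary strings of length $n$ (digits $1..n$, $n+1..2n$, $2n+1..3n$), so $Q_{6n}=Q_{2n}\Box Q_{2n}\Box Q_{2n}$, and let $\Psi_E(u,w,t)=(\pi_E(u),\pi_E(w),\pi_E(t))$; $\Psi_E^{-1}$ maps edges of $G_{n,3}$ to edges of $Q_{6n}$. For a Hamilton cycle $H$ of $G_{n,3}$, $g(E,H):=\Psi_E^{-1}(H)$, a Hamilton cycle of $Q_{6n}$. *)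

From mathcomp Require Import all_boot.
Set Implicit Arguments. Unset Strict Implicit. Unset Printing Implicit Defensive.

(* Vertices of the cyclic-product graph C_m^k : strings of length k over Z/mZ,
   represented as finite functions 'I_k -> 'I_m. *)
Definition cvert (m k : nat) := {ffun 'I_k -> 'I_m}.

Definition cadj (m k : nat) : rel (cvert m k) := fun x y =>
  [exists i : 'I_k,
     [forall j : 'I_k, (j != i) ==> (x j == y j)] &&
     ((y i == (x i).+1 %% m :> nat) || (x i == (y i).+1 %% m :> nat))].

(* Q_{2n}: quaternary strings of length n, adjacent iff they differ in exactly
   one position, by +-1 mod 4. *)
Definition qstr (n : nat) := cvert 4 n.
Definition qadj (n : nat) : rel (qstr n) := @cadj 4 n.

(* G_{n,3} = C_{4^n} [] C_{4^n} [] C_{4^n}, vertex set (Z/4^n Z)^3. *)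
Definition gvert (n : nat) := cvert (4 ^ n) 3.
Definition gadj (n : nat) : rel (gvert n) := @cadj (4 ^ n) 3.

(* A Hamilton cycle, given as the cyclic (directed) list of its vertices:
   every vertex occurs exactly once and cyclically consecutive vertices
   are adjacent. *)
Definition ham_cycle (T : finType) (adj : rel T) (c : seq T) : Prop :=
  [/\ uniq c, forall x : T, x \in c & cycle adj c].

Definition cyc_edge (T : eqType) (c : seq T) (x y : T) : bool :=
  ((x, y) \in zip c (rot 1 c)) || ((y, x) \in zip c (rot 1 c)).

Definition edge_disjoint (T : eqType) (c1 c2 : seq T) : Prop :=
  forall x y : T, ~~ (cyc_edge c1 x y && cyc_edge c2 x y).

Definition qzero (n : nat) : qstr n := [ffun => ord0].

Definition dham_from0 (n : nat) (E : seq (qstr n)) : Prop :=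
  ham_cycle (@qadj n) E /\ nth (qzero n) E 0 = qzero n.

Definition piE (n : nat) (E : seq (qstr n)) (u : qstr n) : nat := index u E.

(* Identification of a triple (u,w,t) of length-n strings with the length-3n
   string whose digits 1..n are u, n+1..2n are w, 2n+1..3n are t. *)
Definition join3 (n : nat) (u w t : qstr n) : qstr (3 * n) :=
  [ffun i : 'I_(3 * n) =>
     nth ord0 ([seq u j | j <- enum 'I_n] ++ [seq w j | j <- enum 'I_n]
                ++ [seq t j | j <- enum 'I_n]) i].

Definition PsiE_inv (n : nat) (E : seq (qstr n)) (v : gvert n) : qstr (3 * n) :=
  join3 (nth (qzero n) E (v ord0))
        (nth (qzero n) E (v (inord 1)))
        (nth (qzero n) E (v (inord 2))).

Definition gEH (n : nat) (E : seq (qstr n)) (H : seq (gvert n)) : seq (qstr (3 * n)) :=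
  map (PsiE_inv E) H.

From mathcomp Require Import all_boot.
From mathcomp Require Import zify.
Set Implicit Arguments. Unset Strict Implicit.

(* An edge of g(E,H) = Psi_E^{-1}(H) is the image of an edge {a,b} of H.
   Since {a,b} is an edge of G_{n,3}, a and b agree in two coordinates and
   differ by +-1 (mod 4^n) in the remaining coordinate i; under Psi_E^{-1}
   the two images therefore agree in two blocks of digits and differ in
   block i by an edge {e_p, e_(p+1)} of the Hamilton cycle E.
   - Same E, different H: Psi_E^{-1} is injective (E lists each string
     once), so a common edge of g(E,H1) and g(E,H2) pulls back to a
     common edge of H1 and H2.
   - Different E: a common edge of g(E1,H) and g(E2,H') changes the same
     block i in both descriptions, and the two changed blocks form a
     common edge of E1 and E2. *)

Section CycleEdges.

Variable T : eqType.

Lemma path_rcons_zip (e : rel T) x s y :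
  path e x (rcons s y) -> all (fun p => e p.1 p.2) (zip (x :: s) (rcons s y)).
Proof.
elim: s x => [|z s IH] x /=; first by rewrite andbT.
by case/andP=> -> /IH.
Qed.

Lemma cycle_zip (e : rel T) c p :
  cycle e c -> p \in zip c (rot 1 c) -> e p.1 p.2.
Proof.
case: c => [|x s] //= hc; rewrite rot1_cons => hp.
by move/allP: (path_rcons_zip hc); apply.
Qed.

Lemma cyc_edgeC (c : seq T) x y : cyc_edge c x y = cyc_edge c y x.
Proof. by rewrite /cyc_edge orbC. Qed.

Lemma cyc_edge_rel (e : rel T) c x y :
  symmetric e -> cycle e c -> cyc_edge c x y -> e x y.
Proof.
move=> e_sym hc /orP[] /(cycle_zip hc) //=; by rewrite e_sym.
Qed.

Lemma edge_disjointC (c1 c2 : seq T) :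
  edge_disjoint c1 c2 -> edge_disjoint c2 c1.
Proof. by move=> h x y; rewrite andbC. Qed.

Lemma nth_rot1 x0 (c : seq T) p : p < size c ->
  nth x0 (rot 1 c) p = nth x0 c (p.+1 %% size c).
Proof.
case: c => [|x s] //= hp; rewrite rot1_cons nth_rcons.
case: (ltngtP p (size s)) => [hlt|hgt|->]; last by rewrite modnn.
  by rewrite modn_small.
by move: hp; rewrite ltnS leqNgt hgt.
Qed.

Lemma cyc_edge_nth x0 (c : seq T) p : p < size c ->
  cyc_edge c (nth x0 c p) (nth x0 c (p.+1 %% size c)).
Proof.
move=> hp; apply/orP; left.
rewrite -nth_rot1 // -nth_zip; last by rewrite size_rot.
by apply: mem_nth; rewrite size_zip size_rot minnn.
Qed.

End CycleEdges.

Lemma zip_map (A B : Type) (f : A -> B) s t :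
  zip (map f s) (map f t) = map (fun p => (f p.1, f p.2)) (zip s t).
Proof. by elim: s t => [|x s IH] [|y t] //=; rewrite IH. Qed.

Lemma cyc_edge_map (A B : eqType) (f : A -> B) c x y :
  cyc_edge (map f c) x y -> exists a b, [/\ cyc_edge c a b, x = f a & y = f b].
Proof.
rewrite /cyc_edge -map_rot zip_map.
case/orP => /mapP[[a b] hin [-> ->]] /=.
  by exists a, b; rewrite hin.
by exists b, a; rewrite hin orbT.
Qed.

Lemma size_ham_cycle (V : finType) (adj : rel V) c :
  ham_cycle adj c -> size c = #|V|.
Proof.
case=> c_uniq c_all _.
by rewrite -(card_uniqP c_uniq) (eq_cardT (A := mem c)) // -cardT.
Qed.

Lemma card_cvert m k : #|cvert m k| = m ^ k.
Proof. by rewrite card_ffun !card_ord. Qed.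

Lemma cadj_sym m k : symmetric (@cadj m k).
Proof.
move=> x y; apply/idP/idP => /existsP[i /andP[/forallP h o]];
 apply/existsP; exists i; rewrite orbC o andbT; apply/forallP=> j;
 apply/implyP=> /(implyP (h j)) /eqP-> //.
Qed.

Lemma succ_mod_neq m a : 1 < m -> a < m -> a.+1 %% m != a.
Proof.
move=> m2 am; case: (ltngtP a.+1 m) => [hl|hg|e].
- by rewrite modn_small //; lia.
- lia.
- by rewrite -e modnn; lia.
Qed.

Lemma cyc_step_edge (T : eqType) x0 (c : seq T) (p q : 'I_(size c)) :
  1 < size c -> uniq c ->
  (q == p.+1 %% size c :> nat) || (p == q.+1 %% size c :> nat) ->
  nth x0 c p != nth x0 c q /\ cyc_edge c (nth x0 c p) (nth x0 c q).
Proof.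
move=> c2 c_uniq step; split.
  rewrite nth_uniq //; case/orP: step => /eqP ->; [rewrite eq_sym|];
  exact: succ_mod_neq.
case/orP: step => /eqP ->; first exact: cyc_edge_nth.
by rewrite cyc_edgeC; apply: cyc_edge_nth.
Qed.

Lemma join3_inj n (u w t u' w' t' : qstr n) :
  join3 u w t = join3 u' w' t' -> [/\ u = u', w = w' & t = t'].
Proof.
set digits := fun v : qstr n => [seq v j | j <- enum 'I_n].
have digits_inj : injective digits.
  move=> v v' /eq_in_map dv; apply/ffunP => j; apply: dv; by rewrite mem_enum.
have size_digits v : size (digits v) = n by rewrite size_map size_enum_ord.
move=> ej.
have : digits u ++ digits w ++ digits t = digits u' ++ digits w' ++ digits t'.
  apply: (eq_from_nth (x0 := ord0)); first by rewrite !size_cat !size_digits.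
  move=> i; rewrite !size_cat !size_digits => hi.
  have hi' : i < 3 * n by lia.
  by move: (congr1 (fun f : qstr (3 * n) => f (Ordinal hi')) ej); rewrite !ffunE.
move/eqP; rewrite eqseq_cat ?size_digits // => /andP[/eqP/digits_inj -> /eqP].
by move/eqP; rewrite eqseq_cat ?size_digits // => /andP[/eqP/digits_inj -> /eqP/digits_inj ->].
Qed.

Lemma ord3P (k : 'I_3) : [\/ k = ord0, k = inord 1 | k = inord 2].
Proof.
by case: k => [[|[|[|]]] hk] //; [apply: Or31 | apply: Or32 | apply: Or33];
  apply: val_inj; rewrite /= ?inordK.
Qed.

Lemma PsiE_inv_blocks n (E E' : seq (qstr n)) a a' :
  PsiE_inv E a = PsiE_inv E' a' ->
  forall k, nth (qzero n) E (a k) = nth (qzero n) E' (a' k).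
Proof. by move=> /join3_inj [h1 h2 h3] k; case: (ord3P k) => ->. Qed.

Section Embedding.

Variable n : nat.
Hypothesis n_gt0 : 0 < n.

Lemma size_qham (E : seq (qstr n)) : ham_cycle (@qadj n) E -> size E = 4 ^ n.
Proof. by move/size_ham_cycle; rewrite card_cvert. Qed.

(* Psi_E^{-1} is injective since E enumerates Q_{2n} without repetition. *)
Lemma PsiE_inv_inj (E : seq (qstr n)) :
  ham_cycle (@qadj n) E -> injective (PsiE_inv E).
Proof.
move=> hE a a' /PsiE_inv_blocks eq_blocks; have sE := size_qham hE.
case: hE => E_uniq _ _; apply/ffunP => k; apply/val_inj/eqP.
by rewrite -(nth_uniq (qzero n) _ _ E_uniq) ?sE ?ltn_ord //; apply/eqP; apply: eq_blocks.
Qed.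

Lemma PsiE_inv_adj (E : seq (qstr n)) (a b : gvert n) :
  ham_cycle (@qadj n) E -> gadj a b ->
  exists i : 'I_3,
   [/\ forall k, k != i -> nth (qzero n) E (a k) = nth (qzero n) E (b k),
       nth (qzero n) E (a i) != nth (qzero n) E (b i) &
       cyc_edge E (nth (qzero n) E (a i)) (nth (qzero n) E (b i))].
Proof.
move=> hE /existsP[i /andP[/forallP same step]].
have sE := size_qham hE; case: hE => E_uniq _ _.
have E2 : 1 < size E by rewrite sE (leq_trans _ (leq_pexp2l _ n_gt0)).
have := cyc_step_edge (qzero n) (p := cast_ord (esym sE) (a i))
           (q := cast_ord (esym sE) (b i)) E2 E_uniq.
rewrite /= sE => /(_ step) [moves edge].
by exists i; split=> // k /(implyP (same k)) /eqP ->.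
Qed.

Lemma gEH_edge (E : seq (qstr n)) (H : seq (gvert n)) x y :
  ham_cycle (@gadj n) H -> cyc_edge (gEH E H) x y ->
  exists a b, [/\ cyc_edge H a b, gadj a b, x = PsiE_inv E a & y = PsiE_inv E b].
Proof.
case=> _ _ hH /cyc_edge_map [a [b [hab ex ey]]].
by exists a, b; split => //; apply: cyc_edge_rel (@cadj_sym _ _) hH hab.
Qed.

(* Same E, edge-disjoint H's: pull a common edge back along Psi_E^{-1}. *)
Lemma gEH_disjoint_sameE (E : seq (qstr n)) (H H' : seq (gvert n)) :
  ham_cycle (@qadj n) E -> ham_cycle (@gadj n) H -> ham_cycle (@gadj n) H' ->
  edge_disjoint H H' -> edge_disjoint (gEH E H) (gEH E H').
Proof.
move=> hE hH hH' disH x y; apply/negP => /andP[/(gEH_edge hH) eH /(gEH_edge hH') eH'].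
case: eH eH' => a [b [ab _ -> ->]] [a' [b' [ab' _]]].
move=> /(PsiE_inv_inj hE) ea' /(PsiE_inv_inj hE) eb'; subst a' b'.
by move/negP: (disH a b); apply; rewrite ab ab'.
Qed.

(* Edge-disjoint E's: a common edge changes the same block in both
   descriptions, and that block change is a common edge of E and E'. *)
Lemma gEH_disjoint_diffE (E E' : seq (qstr n)) (H H' : seq (gvert n)) :
  ham_cycle (@qadj n) E -> ham_cycle (@qadj n) E' -> edge_disjoint E E' ->
  ham_cycle (@gadj n) H -> ham_cycle (@gadj n) H' ->
  edge_disjoint (gEH E H) (gEH E' H').
Proof.
move=> hE hE' disE hH hH' x y.
apply/negP => /andP[/(gEH_edge hH) eH /(gEH_edge hH') eH'].
case: eH eH' => a [b [_ ab -> ->]] [a' [b' [_ ab']]].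
move=> /PsiE_inv_blocks eqa /PsiE_inv_blocks eqb.
case: (PsiE_inv_adj hE ab) => i [same_i moves_i edge_i].
case: (PsiE_inv_adj hE' ab') => i' [same_i' _ edge_i'].
have same_block : i' = i.
  apply/eqP; apply: contraTT moves_i => ne.
  by rewrite negbK eqa eqb same_i' // eq_sym.
subst i'; move/negP: (disE (nth (qzero n) E (a i)) (nth (qzero n) E (b i))).
by apply; rewrite edge_i eqa eqb edge_i'.
Qed.

Lemma gEH_disjoint (E E' : seq (qstr n)) (H H' : seq (gvert n)) :
  dham_from0 E -> dham_from0 E' ->
  ham_cycle (@gadj n) H -> ham_cycle (@gadj n) H' ->
  (E = E' /\ edge_disjoint H H') \/ edge_disjoint E E' ->
  edge_disjoint (gEH E H) (gEH E' H').
Proof.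
move=> [hE _] [hE' _] hH hH' [[<- disH]|disE].
  exact: gEH_disjoint_sameE.
exact: gEH_disjoint_diffE.
Qed.

End Embedding.

Theorem lemma5 (n : nat) (H1 H2 : seq (gvert n)) (E1 E2 : seq (qstr n)) :
  1 <= n ->
  ham_cycle (@gadj n) H1 -> ham_cycle (@gadj n) H2 -> edge_disjoint H1 H2 ->
  dham_from0 E1 -> dham_from0 E2 -> edge_disjoint E1 E2 ->
  let C := [:: gEH E1 H1; gEH E1 H2; gEH E2 H1; gEH E2 H2] in
  forall i j : nat, i < 4 -> j < 4 -> i != j ->
    edge_disjoint (nth [::] C i) (nth [::] C j).
Proof.
move=> n_gt0 hH1 hH2 disH dE1 dE2 disE C.
have disH' := edge_disjointC disH; have disE' := edge_disjointC disE.
case=> [|[|[|[|i]]]] [|[|[|[|j]]]] //= _ _ _;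
  apply: gEH_disjoint => //; by [left | right].
Qed.
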